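(* Let $T$ be a semi-complete digraph on $n$ vertices that admits an ordering $(v_1,\dots,v_n)$ of cost at most $k$. Then the width of this ordering is at most $(4k)^{2/3}$.
   Context: A simple digraph (no loops, no multiple arcs) $T$ is semi-complete if for every pair of distinct vertices $v,w$ at least one of $(v,w),(w,v)$ is an arc. The cost of an ordering $(v_1,\dots,v_n)$ of $V(T)$ is $\sum_{(v_i,v_j)\in E(T),\,i>j}(i-j)$. The width of the ordering is $\max_{1\le t\le n-1}|E(\{v_{t+1},\dots,v_n\},\{v_1,\dots,v_t\})|$, where $E(A,B)$ is the set of arcs with tail in $A$ and head in $B$. *)

From mathcomp Require Import all_boot.
Set Implicit Arguments. Unset Strict Implicit. Unset Printing Implicit Defensive.

(* A simple digraph on a finite vertex type T is an arc relation E : rel T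
   (E v w means (v,w) is an arc); "no multiple arcs" is automatic for a
   relation, "no loops" is irreflexivity. *)
Definition semicomplete (T : finType) (E : rel T) : Prop :=
  irreflexive E /\ (forall v w : T, v != w -> E v w || E w v).

(* An ordering (v_1,...,v_n) of V(T) is a bijection f : 'I_n -> T,
   with v_{i+1} = f i (0-indexed positions). *)

Definition ord_cost (T : finType) (E : rel T) (n : nat) (f : 'I_n -> T) : nat :=
  \sum_(p : 'I_n * 'I_n | (p.2 < p.1) && E (f p.1) (f p.2)) (p.1 - p.2).

(* |E({v_{t+1},...,v_n}, {v_1,...,v_t})|: in 0-indexed positions, the tails
   are at positions >= t and heads at positions < t. *)
Definition cut_size (T : finType) (E : rel T) (n : nat) (f : 'I_n -> T)
    (t : nat) : nat :=
  #|[set p : 'I_n * 'I_n | [&& t <= p.1, p.2 < t & E (f p.1) (f p.2)]]|.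

Definition ord_width (T : finType) (E : rel T) (n : nat) (f : 'I_n -> T) : nat :=
  \max_(t < n | 0 < t) cut_size E f t.

From mathcomp Require Import all_boot.
From mathcomp Require Import zify.
From Stdlib Require PeanoNat.

(* Fix a cut position t and let S be a set of position pairs (i, j) with
   j < t <= i (backward arcs crossing the cut); the length of such an arc is
   i - j.  An arc of S of length l is determined by its tail, which lies among
   the l positions t, ..., t + l - 1; hence S has at most l arcs of length l
   and at most C(m, 2) arcs of length < m.  Every other arc has length >= m, so
       m * |S| <= (total length of S) + m * C(m, 2)      for every m.
   Choosing m = floor(sqrt |S|) turns this trade-off into |S|^3 <= (4 L)^2
   whenever the total length is at most L (a purely arithmetic step).  Finally,
   the arcs crossing a cut contribute at most the cost of the ordering, and the
   width is the maximum of the cut sizes. *)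

Lemma card_window (n a m : nat) : #|[set i : 'I_n | a <= i < a + m]| <= m.
Proof.
rewrite cardsE cardE -(size_map val) -[X in _ <= X](size_iota a).
apply: uniq_leq_size; first by rewrite (map_inj_uniq val_inj) enum_uniq.
move=> x /mapP[i]; rewrite mem_enum => window_i ->.
by rewrite mem_iota.
Qed.

(* The arithmetic core: a size w that satisfies the trade-off against a total
   length L for every threshold m obeys w^3 <= (4 L)^2; the proof uses
   m = floor(sqrt w), for which m * w <= 2 L and w <= 4 m^2. *)
Lemma cube_bound_of_tradeoff (w L : nat) :
  (forall m, m * w <= L + m * 'C(m, 2)) -> w ^ 3 <= (4 * L) ^ 2.
Proof.
move=> tradeoff; have [-> // | w_gt0] := posnP w.
have [/leP m2_le_w /ltP w_lt] := PeanoNat.Nat.sqrt_spec w (PeanoNat.Nat.le_0_l w).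
set m := Nat.sqrt w in m2_le_w w_lt.
have m_gt0 : 0 < m by case: m m2_le_w w_lt => //; lia.
have two_binm : 2 * 'C(m, 2) <= m * m.-1 by rewrite bin2 mul2n halfK leq_subr.
have mw_le : m * w <= 2 * L by have := tradeoff m; nia.
have w_le : w <= 4 * (m * m) by nia.
have : (m * w) ^ 2 <= (2 * L) ^ 2 by rewrite leq_exp2r.
rewrite !expnS !expn0; nia.
Qed.

Definition arc_length {n : nat} (p : 'I_n * 'I_n) : nat := p.1 - p.2.

Section CrossingArcs.
Variables (n t : nat) (S : {set 'I_n * 'I_n}).
Hypothesis S_crossing : forall p, p \in S -> p.2 < t <= p.1.

(* Crossing arcs of length l are determined by their tails, which lie in the
   window [t, t + l). *)
Lemma card_crossing_length_eq (l : nat) : #|[set p in S | arc_length p == l]| <= l.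
Proof.
have tail_inj : {in [set p in S | arc_length p == l] &, injective (fun p => p.1)}.
  move=> p p'; rewrite !inE /arc_length => /andP[pS /eqP len] /andP[p'S /eqP len'] tails.
  have := S_crossing _ pS; have := S_crossing _ p'S.
  case: p p' tails len len' {pS p'S} => [i j] [i' j'] /= <-.
  by move=> cross' cross len len'; congr pair; apply: ord_inj; lia.
rewrite -(card_in_imset tail_inj); apply: leq_trans (card_window n t l).
apply/subset_leq_card/subsetP => x /imsetP[p]; rewrite !inE /arc_length => /andP[pS /eqP len] ->.
by case: p pS len => [i j] pS /= len; have := S_crossing _ pS; rewrite /=; lia.
Qed.

(* Hence there are at most 0 + 1 + ... + (m - 1) crossing arcs shorter than m. *)
Lemma card_crossing_length_lt (m : nat) : #|[set p in S | arc_length p < m]| <= 'C(m, 2).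
Proof.
elim: m => [|m IH]; first by rewrite leqn0 cards_eq0; apply/eqP/setP => p; rewrite !inE andbF.
have split_len : [set p in S | arc_length p < m.+1] =
    [set p in S | arc_length p < m] :|: [set p in S | arc_length p == m].
  by apply/setP => p; rewrite !inE ltnS leq_eqVlt orbC -andb_orr.
rewrite split_len binS bin1; apply: leq_trans (leq_card_setU _ _) _.
exact: leq_add IH (card_crossing_length_eq m).
Qed.

(* Every crossing arc of length at least m contributes m to the total length. *)
Lemma crossing_tradeoff (m : nat) :
  m * #|S| <= \sum_(p in S) arc_length p + m * #|[set p in S | arc_length p < m]|.
Proof.
rewrite -!sum1_card !big_distrr big_mkcond [X in _ <= X + _]big_mkcond.
rewrite [X in _ <= _ + X]big_mkcond -big_split /=.
apply: leq_sum => p _; rewrite inE; case: (p \in S) => //=.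
by rewrite muln1; case: ltnP => /= [_|]; [exact: leq_addl | rewrite addn0].
Qed.

Lemma crossing_card_cube (L : nat) :
  \sum_(p in S) arc_length p <= L -> #|S| ^ 3 <= (4 * L) ^ 2.
Proof.
move=> total_le; apply: cube_bound_of_tradeoff => m.
apply: leq_trans (crossing_tradeoff m) _.
by apply: leq_add total_le _; rewrite leq_mul2l card_crossing_length_lt orbT.
Qed.

End CrossingArcs.

Definition cut_arcs {T : finType} (E : rel T) {n : nat} (f : 'I_n -> T)
    (t : nat) : {set 'I_n * 'I_n} :=
  [set p : 'I_n * 'I_n | [&& t <= p.1, p.2 < t & E (f p.1) (f p.2)]].

(* Each arc crossing a cut is a backward arc, so the cut lengths are paid for
   by the cost. *)
Lemma cut_length_le_cost (T : finType) (E : rel T) (n : nat) (f : 'I_n -> T)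
    (t : nat) :
  \sum_(p in cut_arcs E f t) arc_length p <= ord_cost E f.
Proof.
rewrite /ord_cost big_mkcond [X in _ <= X]big_mkcond /=.
apply: leq_sum => p _; rewrite inE.
by case/boolP: [&& _, _ & _] => // /and3P[tail_ge head_lt ->]; rewrite (leq_trans head_lt).
Qed.

Theorem mainTheorem13 (T : finType) (E : rel T) (n : nat) (f : 'I_n -> T)
    (k : nat) :
  semicomplete E -> bijective f -> ord_cost E f <= k ->
  ord_width E f ^ 3 <= (4 * k) ^ 2.
Proof.
move=> _ _ cost_le; rewrite /ord_width.
elim/big_ind: _ => [// | x y x_ok y_ok | t _]; first by rewrite /maxn; case: ifP.
apply: (@crossing_card_cube n t (cut_arcs E f t)).
  by move=> p; rewrite inE => /and3P[-> -> _].
apply: leq_trans cost_le.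
exact: cut_length_le_cost.
Qed.
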